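(* Let $C$ be a totally bounded subset of a metric space $(X,d)$ with II-modulus of total boundedness $\gamma$, $T:C\to C$ nonexpansive with $\mathrm{Fix}(T)\ne\emptyset$, $x\in C$, $x_n:=T^nx$, and assume $(x_n)$ is asymptotically regular with rate of asymptotic regularity $\Phi^{++}$. Then for all $k\in\mathbb{N}$ and $g:\mathbb{N}\to\mathbb{N}$ there exists $N\le\Theta:=\Theta_0(\gamma^M(4k+3))+K$ such that for all $i,j\in[N,N+g(N)]$ and all $m\ge N$: $d(x_i,x_j)\le\frac1{k+1}$ and $d(x_m,Tx_m)\le\frac1{k+1}$. Here $K=(\Phi^{++})^M(k)$, $\Theta_0(0)=0$ and $\Theta_0(n+1)=(\Phi^{++})^M\big((g^M(\Theta_0(n)+K)+K)(4k+4)\big)$.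
   Context: II-modulus $\gamma$ for $C$: for every $k$ and every sequence $(y_n)$ in $C$ there are $0\le i<j\le\gamma(k)$ with $d(y_i,y_j)\le\frac1{k+1}$. Nonexpansive: $d(Tx,Ty)\le d(x,y)$. A rate of asymptotic regularity is $\Phi^{++}:\mathbb{N}\to\mathbb{N}$ with $d(x_n,Tx_n)\le\frac1{k+1}$ for all $k$ and all $n\ge\Phi^{++}(k)$. For $f:\mathbb{N}\to\mathbb{N}$, $f^M(n):=\max\{f(i)\mid i\le n\}$. *)

From Stdlib Require Import Reals Arith Lia.
Open Scope R_scope.

Record is_metric {X : Type} (d : X -> X -> R) : Prop := {
  metric_nonneg : forall x y, 0 <= d x y;
  metric_zero : forall x y, d x y = 0 <-> x = y;
  metric_sym : forall x y, d x y = d y x;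
  metric_triangle : forall x y z, d x z <= d x y + d y z
}.

(* f^M(n) := max { f(i) | i <= n } *)
Fixpoint fmax (f : nat -> nat) (n : nat) : nat :=
  match n with
  | O => f O
  | S n' => Nat.max (fmax f n') (f (S n'))
  end.

Definition II_modulus {X : Type} (d : X -> X -> R) (C : X -> Prop)
  (gamma : nat -> nat) : Prop :=
  forall (k : nat) (y : nat -> X), (forall n, C (y n)) ->
    exists i j, (i < j)%nat /\ (j <= gamma k)%nat /\ d (y i) (y j) <= / INR (k + 1).

Definition maps_into {X : Type} (C : X -> Prop) (T : X -> X) : Prop :=
  forall x, C x -> C (T x).

Definition nonexpansive_on {X : Type} (d : X -> X -> R) (C : X -> Prop)
  (T : X -> X) : Prop :=
  forall x y, C x -> C y -> d (T x) (T y) <= d x y.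

Definition rate_asymp_reg {X : Type} (d : X -> X -> R) (T : X -> X)
  (xs : nat -> X) (Phi : nat -> nat) : Prop :=
  forall k n, (Phi k <= n)%nat -> d (xs n) (T (xs n)) <= / INR (k + 1).

Fixpoint Theta0 (Phi g : nat -> nat) (k : nat) (n : nat) : nat :=
  match n with
  | O => O
  | S n' =>
      let K := fmax Phi k in
      fmax Phi ((fmax g (Theta0 Phi g k n' + K) + K) * (4 * k + 4))
  end.

Definition Theta (Phi g gamma : nat -> nat) (k : nat) : nat :=
  (Theta0 Phi g k (fmax gamma (4 * k + 3)) + fmax Phi k)%nat.

(* The indices Theta0 l + K, l <= gamma^M(4k+3), sample the orbit at
   gamma(4k+3) + 1 points, so the II-modulus gives l < l' whose sampled points
   N := Theta0 l + K and n := Theta0 l' + K satisfy d(x_N, x_n) <= 1/(4k+4).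
   Nonexpansiveness carries this over to the shifted windows:
   d(x_(N+u), x_(n+u)) <= 1/(4k+4).  Since n >= Theta0 (l+1), asymptotic
   regularity makes every step after n shorter than 1/((g(N)+K)(4k+4)+1), so
   the window [n, n+g(N)] has diameter at most 1/(4k+4).  Hence the window
   [N, N+g(N)] has diameter at most 3/(4k+4), and N >= K gives the step bound. *)
From Stdlib Require Import Reals Arith.
From Stdlib Require Import Lia Lra Psatz.
Open Scope R_scope.

Lemma le_fmax (f : nat -> nat) (n i : nat) : (i <= n)%nat -> (f i <= fmax f n)%nat.
Proof.
  induction n as [|n IHn]; intros Hi; simpl.
  - replace i with 0%nat by lia; lia.
  - destruct (Nat.eq_dec i (S n)) as [->|Hne]; [lia|].
    specialize (IHn ltac:(lia)); lia.
Qed.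

Lemma fmax_monotone (f : nat -> nat) (m n : nat) :
  (m <= n)%nat -> (fmax f m <= fmax f n)%nat.
Proof. induction 1; simpl; lia. Qed.

Lemma Theta0_le_S (Phi g : nat -> nat) (k n : nat) :
  (Theta0 Phi g k n <= Theta0 Phi g k (S n))%nat.
Proof.
  induction n as [|n IHn]; simpl; [lia|].
  apply fmax_monotone, Nat.mul_le_mono_r, Nat.add_le_mono_r, fmax_monotone.
  simpl in IHn; lia.
Qed.

Lemma Theta0_monotone (Phi g : nat -> nat) (k m n : nat) :
  (m <= n)%nat -> (Theta0 Phi g k m <= Theta0 Phi g k n)%nat.
Proof.
  induction 1 as [|n _ IH]; [lia|].
  pose proof (Theta0_le_S Phi g k n); lia.
Qed.

Lemma rate_asymp_reg_fmax {X : Type} (d : X -> X -> R) (T : X -> X)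
  (xs : nat -> X) (Phi : nat -> nat) :
  rate_asymp_reg d T xs Phi ->
  forall k n, (fmax Phi k <= n)%nat -> d (xs n) (T (xs n)) <= / INR (k + 1).
Proof.
  intros HPhi k n Hn; apply HPhi.
  pose proof (le_fmax Phi k k (le_n k)); lia.
Qed.

Lemma INR_mul_inv_le (G M c : nat) :
  (G * c <= M)%nat -> (0 < c)%nat -> INR G * / INR (M + 1) <= / INR c.
Proof.
  intros HGM Hc.
  apply le_INR in HGM; rewrite mult_INR in HGM.
  assert (HM : INR M + 1 = INR (M + 1)) by (rewrite plus_INR; simpl; lra).
  assert (Hc' : 0 < INR c) by (apply lt_0_INR; lia).
  assert (HM' : 0 < INR (M + 1)) by (apply lt_0_INR; lia).
  apply (Rmult_le_reg_r (INR c * INR (M + 1))); [nra|].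
  field_simplify; lra.
Qed.

Lemma three_inv_INR_4k4_le (k : nat) : 3 * / INR (4 * k + 4) <= / INR (k + 1).
Proof.
  replace (4 * k + 4)%nat with (4 * (k + 1))%nat by lia.
  rewrite mult_INR, Rinv_mult.
  assert (0 < / INR (k + 1)) by (apply Rinv_0_lt_compat, lt_0_INR; lia).
  simpl; lra.
Qed.

Section Orbit.

Variables (X : Type) (d : X -> X -> R) (C : X -> Prop) (T : X -> X).
Hypothesis Hd : is_metric d.

Lemma iter_maps_into : maps_into C T -> forall n y, C y -> C (Nat.iter n T y).
Proof. intros HTC n; induction n; intros y Hy; simpl; auto. Qed.

Lemma iter_nonexpansive :
  maps_into C T -> nonexpansive_on d C T ->
  forall t y z, C y -> C z -> d (Nat.iter t T y) (Nat.iter t T z) <= d y z.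
Proof.
  intros HTC HT t; induction t as [|t IHt]; intros y z Hy Hz; simpl; [lra|].
  eapply Rle_trans; [apply HT; apply iter_maps_into; auto | apply IHt; auto].
Qed.

Variable x : X.
Let xs (n : nat) : X := Nat.iter n T x.

Lemma dist_orbit_shift_le (n : nat) (delta : R) :
  (forall p, (n <= p)%nat -> d (xs p) (T (xs p)) <= delta) ->
  forall t p, (n <= p)%nat -> d (xs p) (xs (t + p)) <= INR t * delta.
Proof.
  intros Hstep t; induction t as [|t IHt]; intros p Hp.
  - simpl; rewrite (proj2 (metric_zero d Hd _ _) eq_refl); lra.
  - eapply Rle_trans; [apply (metric_triangle d Hd _ (xs (t + p)))|].
    rewrite S_INR.
    assert (d (xs (t + p)) (xs (S t + p)) <= delta) by (apply Hstep; lia).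
    specialize (IHt p Hp); lra.
Qed.

Lemma dist_orbit_window_le (n G : nat) (delta : R) :
  (forall p, (n <= p)%nat -> d (xs p) (T (xs p)) <= delta) ->
  forall u v, (u <= G)%nat -> (v <= G)%nat ->
  d (xs (u + n)) (xs (v + n)) <= INR G * delta.
Proof.
  intros Hstep.
  assert (Hdelta : forall p, (n <= p)%nat -> 0 <= delta).
  { intros p Hp; eapply Rle_trans; [apply (metric_nonneg d Hd)|]; apply Hstep, Hp. }
  assert (Hle : forall u v, (u <= v)%nat -> (v <= G)%nat ->
            d (xs (u + n)) (xs (v + n)) <= INR G * delta).
  { intros u v Huv HvG.
    pose proof (dist_orbit_shift_le n delta Hstep (v - u) (u + n) ltac:(lia)) as H.
    replace (v - u + (u + n))%nat with (v + n)%nat in H by lia.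
    eapply Rle_trans; [exact H|].
    apply Rmult_le_compat_r; [apply (Hdelta n (le_n n)) | apply le_INR; lia]. }
  intros u v Hu Hv; destruct (le_lt_dec u v).
  - apply Hle; auto.
  - rewrite (metric_sym d Hd); apply Hle; lia.
Qed.

Lemma dist_orbit_near_window_le (N n G : nat) (eps delta : R) :
  maps_into C T -> nonexpansive_on d C T -> C x ->
  d (xs N) (xs n) <= eps ->
  (forall p, (n <= p)%nat -> d (xs p) (T (xs p)) <= delta) ->
  forall i j, (N <= i <= N + G)%nat -> (N <= j <= N + G)%nat ->
  d (xs i) (xs j) <= 2 * eps + INR G * delta.
Proof.
  intros HTC HT Hx HNn Hstep.
  assert (Hshift : forall i, (N <= i)%nat -> d (xs i) (xs (i - N + n)) <= eps).
  { intros i Hi.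
    replace (xs i) with (Nat.iter (i - N) T (xs N))
      by (unfold xs; rewrite <- Nat.iter_add; f_equal; lia).
    replace (xs (i - N + n)) with (Nat.iter (i - N) T (xs n))
      by (unfold xs; rewrite <- Nat.iter_add; reflexivity).
    eapply Rle_trans; [apply iter_nonexpansive; auto; apply iter_maps_into; auto|].
    exact HNn. }
  intros i j Hi Hj.
  pose proof (Hshift i ltac:(lia)); pose proof (Hshift j ltac:(lia)).
  pose proof (dist_orbit_window_le n G delta Hstep (i - N) (j - N) ltac:(lia) ltac:(lia)).
  eapply Rle_trans; [apply (metric_triangle d Hd _ (xs (i - N + n)))|].
  eapply Rle_trans;
    [apply Rplus_le_compat_l, (metric_triangle d Hd _ (xs (j - N + n)))|].
  rewrite (metric_sym d Hd (xs (j - N + n))); lra.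
Qed.

End Orbit.

Theorem theorem7p8 (X : Type) (d : X -> X -> R) (C : X -> Prop)
  (gamma : nat -> nat) (T : X -> X) (x : X) (Phi : nat -> nat)
  (Hd : is_metric d)
  (Hgamma : II_modulus d C gamma)
  (HTC : maps_into C T)
  (HT : nonexpansive_on d C T)
  (Hfix : exists p, C p /\ T p = p)
  (Hx : C x)
  (HPhi : rate_asymp_reg d T (fun n => Nat.iter n T x) Phi) :
  forall (k : nat) (g : nat -> nat),
    exists N : nat, (N <= Theta Phi g gamma k)%nat /\
      (forall i j, (N <= i <= N + g N)%nat -> (N <= j <= N + g N)%nat ->
         d (Nat.iter i T x) (Nat.iter j T x) <= / INR (k + 1)) /\
      (forall m, (N <= m)%nat ->
         d (Nat.iter m T x) (T (Nat.iter m T x)) <= / INR (k + 1)).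
Proof.
  intros k g.
  set (K := fmax Phi k).
  destruct (Hgamma (4 * k + 3)%nat (fun l => Nat.iter (Theta0 Phi g k l + K) T x))
    as (l & l' & Hll' & Hl'gamma & Hclose).
  { intro l; apply iter_maps_into; auto. }
  set (N := (Theta0 Phi g k l + K)%nat).
  set (M := ((fmax g N + K) * (4 * k + 4))%nat).
  exists N; split; [|split].
  - unfold Theta; apply Nat.add_le_mono_r, Theta0_monotone.
    pose proof (le_fmax gamma (4 * k + 3) (4 * k + 3) (le_n _)); lia.
  - assert (Hstep : forall p, (Theta0 Phi g k l' + K <= p)%nat ->
              d (Nat.iter p T x) (T (Nat.iter p T x)) <= / INR (M + 1)).
    { intros p Hp; apply (rate_asymp_reg_fmax d T _ Phi HPhi).
      assert (HS : Theta0 Phi g k (S l) = fmax Phi M) by reflexivity.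
      pose proof (Theta0_monotone Phi g k (S l) l' Hll'); lia. }
    assert (Hwindow : INR (g N) * / INR (M + 1) <= / INR (4 * k + 4)).
    { apply INR_mul_inv_le; [|lia].
      pose proof (le_fmax g N N (le_n _)); unfold M; nia. }
    replace (4 * k + 3 + 1)%nat with (4 * k + 4)%nat in Hclose by lia.
    intros i j Hi Hj.
    eapply Rle_trans;
      [apply (dist_orbit_near_window_le X d C T Hd x N _ (g N) _ _ HTC HT Hx Hclose Hstep);
       assumption|].
    pose proof (three_inv_INR_4k4_le k); lra.
  - intros m Hm; apply (rate_asymp_reg_fmax d T _ Phi HPhi). unfold N in Hm; lia.
Qed.
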